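(* Let $P=(I,J,K)$ be a reduced presentation and let $a\in I$. Then $\mathbf{\L}_a$ is embeddable in $\mathbf B_\Delta$.
   Context: Wajsberg hoops: basic hoops satisfying $(x\to y)\to y\approx(y\to x)\to x$. $\Gamma(\mathbf G,u)$ is the Wajsberg hoop on $[0,u]$ with $ab=\max\{a+b-u,0\}$, $a\to b=\min\{u-a+b,u\}$; $\mathbf{\L}_n=\Gamma(\mathbb Z,n)$ (elements $0,\dots,n$), $\mathbf{\L}_{n,k}=\Gamma(\mathbb Z\times_l\mathbb Z,(n,k))$ (lexicographic order), $\mathbf{\L}_n^\infty=\mathbf{\L}_{n,0}$, $\mathbf C_\omega$ the negative cone of $\mathbb Z$, i.e. the free monoid on one generator $c$ with $c^l\to c^m=c^{\max(l-m,0)}$. In a bounded Wajsberg hoop, $\neg a=a\to0$. $X{\downarrow}$ = set of divisors of elements of $X$. A presentation $P=(I,J,K)$ ($I,J$ finite subsets of $\mathbb N\setminus\{0\}$, $K\subseteq\{\omega\}$) is reduced if $I\cup J\cup K\ne\emptyset$, $J\ne\emptyset\Rightarrow K=\emptyset$, no $m\in I$ divides any element of $(I\setminus\{m\})\cup J$, and no $n\in J$ divides any element of $J\setminus\{n\}$. Generators: for $k\ge2$, $0\le h<k$, $\gcd(k,h)=1$, $g_{k,h}$ is the unique element $a\in\mathbf{\L}_{k,h}$ with $a\le\neg a$ generating $\mathbf{\L}_{k,h}$; $g_{1,0}=(0,1)\in\mathbf{\L}_{1,0}$. Construction: $\Delta_I=\{(k,h,2):0\le h<k\in I{\downarrow},\gcd(k,h)=1\}$,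 $\Delta_J=\{(k,h,i):i\in\{0,1\},0\le h<k\in J{\downarrow},\gcd(k,h)=1\}$, $\Delta_K=\{(0,0,3)\}$ if $K=\{\omega\}$, else $\emptyset$; $\Delta=\Delta_I\cup\Delta_J\cup\Delta_K$; $\mathbf A^0_{k,h}=\mathbf A^1_{k,h}=\mathbf{\L}_{k,h}$, $\mathbf A^2_{k,h}=\mathbf{\L}_k$, $\mathbf A^3_{k,h}=\mathbf C_\omega$; $\mathbf A_\Delta=\prod_{(k,h,i)\in\Delta}\mathbf A^i_{k,h}$; $\bar g(k,h,0)=g_{k,h}$, $\bar g(k,h,1)=\neg g_{k,h}$, $\bar g(k,h,2)=h\in\mathbf{\L}_k$, $\bar g(0,0,3)=c$; $\mathbf B_\Delta$ is the subalgebra of $\mathbf A_\Delta$ generated by $\bar g$. *)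

From Stdlib Require Import ZArith List Arith ClassicalEpsilon.
Import ListNotations.
Open Scope Z_scope.

Definition lexleb (p q : Z * Z) : bool :=
  (fst p <? fst q) || ((fst p =? fst q) && (snd p <=? snd q)).
Definition lexle (p q : Z * Z) : Prop := lexleb p q = true.
Definition lmax (p q : Z * Z) : Z * Z := if lexleb p q then q else p.
Definition lmin (p q : Z * Z) : Z * Z := if lexleb p q then p else q.
Definition padd (p q : Z * Z) : Z * Z := (fst p + fst q, snd p + snd q).
Definition psub (p q : Z * Z) : Z * Z := (fst p - fst q, snd p - snd q).

(** * L_{k,h} = Gamma(Z x_l Z, (k,h)) : universe [(0,0),(k,h)] (lex order) *)
Definition uL (k h : nat) : Z * Z := (Z.of_nat k, Z.of_nat h).
Definition memL (k h : nat) (a : Z * Z) : Prop :=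
  lexle (0, 0) a /\ lexle a (uL k h).
Definition mulL (k h : nat) (a b : Z * Z) : Z * Z :=
  lmax (psub (padd a b) (uL k h)) (0, 0).
Definition impL (k h : nat) (a b : Z * Z) : Z * Z :=
  lmin (padd (psub (uL k h) a) b) (uL k h).
Definition negL (k h : nat) (a : Z * Z) : Z * Z := impL k h a (0, 0).

Inductive genL (k h : nat) (a : Z * Z) : Z * Z -> Prop :=
| genL_gen : genL k h a a
| genL_one : genL k h a (uL k h)
| genL_mul x y : genL k h a x -> genL k h a y -> genL k h a (mulL k h x y)
| genL_imp x y : genL k h a x -> genL k h a y -> genL k h a (impL k h x y).

Definition is_gen (k h : nat) (a : Z * Z) : Prop :=
  memL k h a /\ lexle a (negL k h a) /\
  (forall b, memL k h b -> genL k h a b).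

(** g_{k,h}: for k >= 2 the (unique) element with the property above
    (chosen by definite description); g_{1,0} = (0,1). *)
Definition g (k h : nat) : Z * Z :=
  if Nat.eqb k 1 then (0, 1)
  else epsilon (inhabits (0, 0)) (is_gen k h).

(** * L_n = Gamma(Z, n), elements 0..n *)
Definition memLn (n : nat) (x : Z) : Prop := 0 <= x <= Z.of_nat n.
Definition mulLn (n : nat) (x y : Z) : Z := Z.max (x + y - Z.of_nat n) 0.
Definition impLn (n : nat) (x y : Z) : Z := Z.min (Z.of_nat n - x + y) (Z.of_nat n).

(** Components are encoded in Z x Z:
    - i = 0,1 : L_{k,h}, elements are pairs as above;
    - i = 2   : L_k, element x in 0..k encoded as (x,0);
    - i = 3   : C_omega = negative cone of Z (product = +, 1 = 0,
                x -> y = min(y-x,0)), element x <= 0 encoded as (x,0);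
                the generator c is -1. *)
Definition idx : Type := (nat * nat * nat)%type.
Definition elt : Type := idx -> Z * Z.

Definition cmul (t : idx) (a b : Z * Z) : Z * Z :=
  match t with
  | (k, h, 0%nat) | (k, h, 1%nat) => mulL k h a b
  | (k, _, 2%nat) => (mulLn k (fst a) (fst b), 0)
  | _ => (fst a + fst b, 0)
  end.
Definition cimp (t : idx) (a b : Z * Z) : Z * Z :=
  match t with
  | (k, h, 0%nat) | (k, h, 1%nat) => impL k h a b
  | (k, _, 2%nat) => (impLn k (fst a) (fst b), 0)
  | _ => (Z.min (fst b - fst a) 0, 0)
  end.
Definition cone (t : idx) : Z * Z :=
  match t with
  | (k, h, 0%nat) | (k, h, 1%nat) => uL k h
  | (k, _, 2%nat) => (Z.of_nat k, 0)
  | _ => (0, 0)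
  end.

Definition mulA (f g : elt) : elt := fun t => cmul t (f t) (g t).
Definition impA (f g : elt) : elt := fun t => cimp t (f t) (g t).
Definition oneA : elt := cone.

Definition gbar : elt := fun t =>
  match t with
  | (k, h, 0%nat) => g k h
  | (k, h, 1%nat) => negL k h (g k h)
  | (_, h, 2%nat) => (Z.of_nat h, 0)
  | _ => (-1, 0)
  end.

(** B_Delta: the subalgebra generated by gbar (operations are pointwise,
    so generation can be done on all indices and then restricted to Delta). *)
Inductive genB : elt -> Prop :=
| genB_gen : genB gbar
| genB_one : genB oneA
| genB_mul f f' : genB f -> genB f' -> genB (mulA f f')
| genB_imp f f' : genB f -> genB f' -> genB (impA f f').

Definition downset (X : list nat) (k : nat) : Prop :=
  exists m, In m X /\ Nat.divide k m.

(* I, J finite subsets of N \ {0}; K subset of {omega} encoded as a bool *)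
Definition reduced (I J : list nat) (K : bool) : Prop :=
  (forall m, In m I -> (0 < m)%nat) /\ (forall n, In n J -> (0 < n)%nat) /\
  (I <> [] \/ J <> [] \/ K = true) /\
  (J <> [] -> K = false) /\
  (forall m, In m I -> forall x, ((In x I /\ x <> m) \/ In x J) ->
      ~ Nat.divide m x) /\
  (forall n, In n J -> forall x, In x J -> x <> n -> ~ Nat.divide n x).

Definition Delta (I J : list nat) (K : bool) (t : idx) : Prop :=
  match t with
  | (k, h, i) =>
      ((i = 2%nat /\ (h < k)%nat /\ downset I k /\ Nat.gcd k h = 1%nat) \/
       ((i = 0%nat \/ i = 1%nat) /\ (h < k)%nat /\ downset J k
            /\ Nat.gcd k h = 1%nat) \/
       (K = true /\ k = 0%nat /\ h = 0%nat /\ i = 3%nat))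
  end.

(* equality of elements of A_Delta (functions restricted to Delta) *)
Definition eqD (I J : list nat) (K : bool) (f f' : elt) : Prop :=
  forall t, Delta I J K t -> f t = f' t.

Definition embeds_in_B (n : nat) (I J : list nat) (K : bool) : Prop :=
  exists phi : Z -> elt,
    (forall x, memLn n x -> genB (phi x)) /\
    (forall x y, memLn n x -> memLn n y ->
        eqD I J K (phi (mulLn n x y)) (mulA (phi x) (phi y))) /\
    (forall x y, memLn n x -> memLn n y ->
        eqD I J K (phi (impLn n x y)) (impA (phi x) (phi y))) /\
    eqD I J K (phi (Z.of_nat n)) oneA /\
    (forall x y, memLn n x -> memLn n y -> eqD I J K (phi x) (phi y) -> x = y).

From Stdlib Require Import ZArith List Arith Lia Bool.
Open Scope Z_scope.

(** The index t0 = (a, a-1, 2) lies in Delta, and there the generator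
    gbar takes the value a-1 in L_a, which generates L_a.  We build, for every
    x in L_a, a "spike" phi(x) in B_Delta equal to x at t0 and equal to the top
    element at every other index of Delta; such a family is an embedding
    because the operations are computed pointwise.  phi(x) is the join of the
    power gbar^(a-x) (value x at t0) with a join of "separators": one-variable
    hoop terms which vanish at a-1 in L_a but are 1 at every other index.
    - at (k,p,2) (k in I-down) the separator is a McNaughton-style piecewise
      linear term equal to 0 at (a-1)/a and to 1 at p/k; reducedness
      guarantees p/k <> (a-1)/a;
    - at the L_{k,h} indices of J-down the same terms act through the
      quotient map L_{k,h} -> L_k (first coordinate), and a "sharpening"
      makes them exactly 1; when gbar lies in the top block of L_{k,h}, a
      term killing the radical (a copy of C_omega) is used instead;
    - at the C_omega index the latter term is also 1. *)

Ltac bool_cases :=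
  repeat match goal with
  | |- context [if ?b then _ else _] =>
      lazymatch b with context [if _ then _ else _] => fail | _ =>
        let E := fresh "E" in destruct b eqn:E;
        rewrite ?orb_true_iff, ?andb_true_iff, ?orb_false_iff, ?andb_false_iff,
          ?Z.ltb_lt, ?Z.ltb_ge, ?Z.eqb_eq, ?Z.eqb_neq, ?Z.leb_le, ?Z.leb_gt in E
      end
  end; simpl in *.

Ltac lex_solve :=
  simpl; unfold mulL, impL, mulLn, impLn, lmin, lmax, lexleb, padd, psub, uL; simpl;
  bool_cases; try (f_equal; lia); lia.

Lemma fst_lmax p q : fst (lmax p q) = Z.max (fst p) (fst q).
Proof. destruct p, q; lex_solve. Qed.

Lemma fst_lmin p q : fst (lmin p q) = Z.min (fst p) (fst q).
Proof. destruct p, q; lex_solve. Qed.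

Lemma mulL_bot k h x y : fst x = 0 -> fst y < Z.of_nat k -> mulL k h x y = (0, 0).
Proof. destruct x, y; simpl; intros; lex_solve. Qed.

Inductive term := Var | One | Mul (x y : term) | Imp (x y : term).

Fixpoint evalA (f : elt) (t : term) : elt :=
  match t with
  | Var => f
  | One => oneA
  | Mul x y => mulA (evalA f x) (evalA f y)
  | Imp x y => impA (evalA f x) (evalA f y)
  end.

Fixpoint evalL (m v : Z) (t : term) : Z :=
  match t with
  | Var => v
  | One => m
  | Mul x y => Z.max (evalL m v x + evalL m v y - m) 0
  | Imp x y => Z.min (m - evalL m v x + evalL m v y) m
  end.

(** Value of a term in C_omega (written additively: 1 = 0) at s. *)
Fixpoint evalC (s : Z) (t : term) : Z :=
  match t with
  | Var => s
  | One => 0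
  | Mul x y => evalC s x + evalC s y
  | Imp x y => Z.min (evalC s y - evalC s x) 0
  end.

Lemma genB_evalA f t : genB f -> genB (evalA f t).
Proof.
  intros Hf; induction t; simpl;
    [exact Hf | apply genB_one | apply genB_mul | apply genB_imp]; auto.
Qed.

Lemma evalA_Ln f t k h v : f (k, h, 2%nat) = (v, 0) ->
  evalA f t (k, h, 2%nat) = (evalL (Z.of_nat k) v t, 0).
Proof.
  intros Hf; induction t; simpl; auto;
    [unfold mulA | unfold impA]; simpl; rewrite IHt1, IHt2; reflexivity.
Qed.

Lemma evalA_C f t s : f (0%nat, 0%nat, 3%nat) = (s, 0) ->
  evalA f t (0%nat, 0%nat, 3%nat) = (evalC s t, 0).
Proof.
  intros Hf; induction t; simpl; auto;
    [unfold mulA | unfold impA]; simpl; rewrite IHt1, IHt2; reflexivity.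
Qed.

Lemma fst_evalA_Lkh f t k h i : (i <= 1)%nat ->
  fst (evalA f t (k, h, i)) = evalL (Z.of_nat k) (fst (f (k, h, i))) t.
Proof.
  intros Hi; induction t; simpl; auto.
  - destruct i as [|[|]]; [reflexivity | reflexivity | lia].
  - unfold mulA; destruct i as [|[|]]; try lia; simpl; unfold mulL;
      rewrite fst_lmax, <- IHt1, <- IHt2; reflexivity.
  - unfold impA; destruct i as [|[|]]; try lia; simpl; unfold impL;
      rewrite fst_lmin, <- IHt1, <- IHt2; reflexivity.
Qed.

(** The top block {k} x Z of L_{k,h} is a copy of C_omega, shifted by h. *)
Lemma evalA_Lkh_top f t k h i s : (i <= 1)%nat -> (1 <= k)%nat ->
  f (k, h, i) = (Z.of_nat k, s) ->
  evalA f t (k, h, i) = (Z.of_nat k, Z.of_nat h + evalC (s - Z.of_nat h) t).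
Proof.
  intros Hi Hk Hf; induction t; simpl.
  - rewrite Hf; f_equal; lia.
  - destruct i as [|[|]]; try lia; unfold oneA, cone, uL; f_equal; lia.
  - unfold mulA; destruct i as [|[|]]; try lia; simpl; rewrite IHt1, IHt2; lex_solve.
  - unfold impA; destruct i as [|[|]]; try lia; simpl; rewrite IHt1, IHt2; lex_solve.
Qed.

(** Term-level powers, the constant 0 of L_m (for m <= N), negation and
    the truncated sum x (+) y = neg x -> y. *)
Fixpoint pow (t : term) (n : nat) : term :=
  match n with O => One | S n => Mul (pow t n) t end.

Definition zeroT (N : nat) : term := pow Var N.
Definition negT (N : nat) (t : term) : term := Imp t (zeroT N).
Definition oplusT (N : nat) (x y : term) : term := Imp (negT N x) y.

(** [lin N A B] realises in L_m the function v |-> clamp(A v - B m, 0, m). *)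
Fixpoint lin (N A : nat) (B : Z) : term :=
  match A with
  | O => if Z.leb 0 B then zeroT N else One
  | S A => Mul (oplusT N (lin N A B) Var) (lin N A (B - 1))
  end.

(** Sharpening: (t -> 0) -> t; it agrees with t where t is 0 or 1 in L_m
    but, in L_{k,h}, lifts first coordinate k to the top element. *)
Definition sharp (N : nat) (t : term) : term := Imp (negT N t) t.

Lemma evalL_pow m v t n : 0 <= evalL m v t <= m ->
  evalL m v (pow t n) = Z.max (m - Z.of_nat n * (m - evalL m v t)) 0.
Proof.
  intros Ht; induction n; simpl pow; simpl evalL.
  - lia.
  - rewrite IHn. assert (0 <= Z.of_nat n * (m - evalL m v t)) by nia. lia.
Qed.

Lemma evalL_zeroT m v N : 0 <= v < m -> m <= Z.of_nat N -> evalL m v (zeroT N) = 0.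
Proof. intros. unfold zeroT. rewrite evalL_pow by (simpl; lia). simpl. nia. Qed.

Lemma evalL_lin m v N A B : 0 <= v < m -> m <= Z.of_nat N ->
  evalL m v (lin N A B) = Z.max 0 (Z.min (Z.of_nat A * v - B * m) m).
Proof.
  intros Hv HN. revert B. induction A as [|A IH]; intros B; simpl lin.
  - destruct (Z.leb_spec 0 B).
    + rewrite evalL_zeroT by lia. nia.
    + simpl. nia.
  - simpl evalL. rewrite evalL_zeroT, !IH by lia. nia.
Qed.

Lemma evalL_sharp m v N t : 0 <= v < m -> m <= Z.of_nat N ->
  (evalL m v t = 0 \/ evalL m v t = m) -> evalL m v (sharp N t) = evalL m v t.
Proof. intros Hv HN Ht. unfold sharp, negT; simpl. rewrite evalL_zeroT by lia. lia. Qed.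

(** Separator of h/a from p/k: value 0 at h in L_a, and value 1 at p in
    L_k whenever a p <> k h (the two cases are h/a < p/k and h/a > p/k). *)
Definition sepraw (N a h k p : nat) : term :=
  if (k * h <? a * p)%nat then lin N (a * k) (Z.of_nat (k * h))
  else negT N (lin N (a * k) (Z.of_nat (k * h) - 1)).

Definition sep (N a h k p : nat) : term := sharp N (sepraw N a h k p).

Lemma sepraw_at_a N a h k p : (h < a)%nat -> (a <= N)%nat ->
  evalL (Z.of_nat a) (Z.of_nat h) (sepraw N a h k p) = 0.
Proof.
  intros. unfold sepraw, negT. destruct (Nat.ltb_spec (k * h) (a * p)); simpl;
    rewrite ?evalL_zeroT, evalL_lin, ?Nat2Z.inj_mul by lia; nia.
Qed.

Lemma sepraw_at_k N a h k p : (p < k)%nat -> (k <= N)%nat -> (a * p <> k * h)%nat ->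
  evalL (Z.of_nat k) (Z.of_nat p) (sepraw N a h k p) = Z.of_nat k.
Proof.
  intros. unfold sepraw, negT. destruct (Nat.ltb_spec (k * h) (a * p)); simpl;
    rewrite ?evalL_zeroT, evalL_lin, ?Nat2Z.inj_mul by lia; nia.
Qed.

Lemma sep_at_a N a h k p : (h < a)%nat -> (a <= N)%nat ->
  evalL (Z.of_nat a) (Z.of_nat h) (sep N a h k p) = 0.
Proof.
  intros. pose proof (sepraw_at_a N a h k p) as Hraw.
  unfold sep. rewrite evalL_sharp; lia.
Qed.

Lemma sep_at_k N a h k p : (p < k)%nat -> (k <= N)%nat -> (a * p <> k * h)%nat ->
  evalL (Z.of_nat k) (Z.of_nat p) (sep N a h k p) = Z.of_nat k.
Proof.
  intros. pose proof (sepraw_at_k N a h k p) as Hraw.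
  unfold sep. rewrite evalL_sharp; lia.
Qed.

(** A term equal to 0 in every L_m (m <= N, generator below the top) and to
    1 on C_omega: it kills exactly the radical. *)
Definition radkill (N : nat) : term :=
  pow (Imp (Imp (zeroT N) (Mul (zeroT N) Var)) Var) N.

Lemma evalC_pow s t n : evalC s (pow t n) = Z.of_nat n * evalC s t.
Proof. induction n; simpl pow; simpl evalC; [lia | rewrite IHn; lia]. Qed.

Lemma radkill_C N s : s <= 0 -> evalC s (radkill N) = 0.
Proof.
  intros. unfold radkill, zeroT. rewrite evalC_pow. simpl. rewrite evalC_pow. simpl.
  replace (Z.of_nat N * s + s - Z.of_nat N * s) with s by ring.
  replace (Z.min (s - Z.min s 0) 0) with 0 by lia. lia.
Qed.

Lemma radkill_L N m v : 0 <= v < m -> m <= Z.of_nat N -> evalL m v (radkill N) = 0.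
Proof.
  intros. unfold radkill. rewrite evalL_pow; simpl; rewrite evalL_zeroT by lia; nia.
Qed.

Lemma zeroT_Lkh f M k h i : (i <= 1)%nat -> (k <= M)%nat ->
  0 <= fst (f (k, h, i)) < Z.of_nat k -> evalA f (zeroT (S M)) (k, h, i) = (0, 0).
Proof.
  intros Hi HM Hf. unfold zeroT. simpl pow. simpl evalA. unfold mulA.
  assert (H0 : fst (evalA f (pow Var M) (k, h, i)) = 0).
  { rewrite fst_evalA_Lkh, evalL_pow by (simpl; lia). simpl. nia. }
  destruct i as [|[|]]; try lia; apply mulL_bot; simpl; auto; lia.
Qed.

Lemma sharp_Lkh f M t k h i : (i <= 1)%nat -> (1 <= k <= M)%nat ->
  0 <= fst (f (k, h, i)) < Z.of_nat k -> fst (evalA f t (k, h, i)) = Z.of_nat k ->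
  evalA f (sharp (S M) t) (k, h, i) = uL k h.
Proof.
  intros Hi Hk Hf Ht.
  change (evalA f (sharp (S M) t)) with
    (impA (impA (evalA f t) (evalA f (zeroT (S M)))) (evalA f t)).
  unfold impA.
  rewrite zeroT_Lkh by lia.
  destruct (evalA f t (k, h, i)) as [t1 t2]; simpl in Ht; subst t1.
  destruct i as [|[|]]; try lia; lex_solve.
Qed.

(** The generator clamped into the universe of each component:
    gen = (1 -> gbar) * 1.  It is an element of B_Delta, and no property of
    g_{k,h} (specified only through the choice operator) is needed below. *)
Definition gen : elt := evalA gbar (Mul (Imp One Var) One).

Lemma gen_Ln k h : (h <= k)%nat -> gen (k, h, 2%nat) = (Z.of_nat h, 0).
Proof.
  intros. unfold gen. rewrite (evalA_Ln _ _ _ _ (Z.of_nat h)) by reflexivity.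
  simpl. f_equal. lia.
Qed.

Lemma gen_C : gen (0%nat, 0%nat, 3%nat) = (-1, 0).
Proof. unfold gen. rewrite (evalA_C _ _ (-1)) by reflexivity. reflexivity. Qed.

Lemma gen_Lkh k h i : (i <= 1)%nat ->
  exists v r, gen (k, h, i) = (v, r) /\ 0 <= v <= Z.of_nat k /\
    (v = Z.of_nat k -> r <= Z.of_nat h).
Proof.
  intros Hi. unfold gen; simpl. unfold mulA, impA, oneA, cone.
  destruct (gbar (k, h, i)) as [y1 y2].
  destruct i as [|[|]]; try lia; simpl;
    unfold mulL, impL, lmin, lmax, lexleb, padd, psub, uL; simpl; bool_cases;
    eexists; eexists; (split; [reflexivity|]); lia.
Qed.

Definition join (x y : elt) : elt := impA (impA x y) y.

Definition bigjoin (l : list elt) (base : elt) : elt := fold_right join base l.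

Lemma genB_bigjoin l b : genB b -> (forall x, In x l -> genB x) -> genB (bigjoin l b).
Proof.
  intros Hb Hl. induction l as [|x l IH]; simpl; auto.
  assert (Hx : genB x) by (apply Hl; simpl; auto).
  assert (Hrest : genB (fold_right join b l)) by (apply IH; intros; apply Hl; simpl; auto).
  unfold join. apply genB_imp; [apply genB_imp|]; auto.
Qed.

Lemma join_top t x y : x t = cone t \/ y t = cone t -> join x y t = cone t.
Proof.
  destruct t as [[k h] i]. unfold join, impA.
  intros [H|H]; rewrite H;
    [destruct (y (k, h, i)) as [z1 z2] | destruct (x (k, h, i)) as [z1 z2]];
    destruct i as [|[|[|]]]; lex_solve.
Qed.

Lemma join_Ln_bot k h x y v : x (k, h, 2%nat) = (v, 0) -> y (k, h, 2%nat) = (0, 0) ->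
  0 <= v <= Z.of_nat k -> join x y (k, h, 2%nat) = (v, 0).
Proof.
  intros Hx Hy Hv. unfold join, impA; simpl. rewrite Hx, Hy; simpl. unfold impLn. f_equal; lia.
Qed.

Lemma bigjoin_top t l b : b t = cone t \/ (exists x, In x l /\ x t = cone t) ->
  bigjoin l b t = cone t.
Proof.
  induction l as [|x l IH]; simpl; intros [Hb | [y [Hy Hyt]]]; auto.
  - contradiction.
  - apply join_top. right. apply IH. auto.
  - apply join_top. destruct Hy as [<- | Hy]; auto. right. apply IH. eauto.
Qed.

Lemma bigjoin_Ln_bot k h l b : b (k, h, 2%nat) = (0, 0) ->
  (forall x, In x l -> x (k, h, 2%nat) = (0, 0)) -> bigjoin l b (k, h, 2%nat) = (0, 0).
Proof.
  intros Hb Hl. induction l as [|x l IH]; simpl; auto.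
  apply join_Ln_bot; [apply Hl; simpl; auto | apply IH; intros; apply Hl; simpl; auto | lia].
Qed.

Lemma cone_idem t : cmul t (cone t) (cone t) = cone t /\ cimp t (cone t) (cone t) = cone t.
Proof.
  destruct t as [[k h] i]. destruct i as [|[|[|]]]; split; lex_solve.
Qed.

Definition tval (t : term) : elt := evalA gen t.

Definition pairs (M : nat) : list (nat * nat) :=
  flat_map (fun k => map (pair k) (seq 0 k)) (seq 1 M).

Lemma in_pairs M k p : In (k, p) (pairs M) <-> (1 <= k <= M)%nat /\ (p < k)%nat.
Proof.
  unfold pairs. rewrite in_flat_map. split.
  - intros [k' [Hk' Hm]]. apply in_map_iff in Hm. destruct Hm as [p' [Heq Hp]].
    inversion Heq; subst. rewrite in_seq in Hk', Hp. lia.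
  - intros [Hk Hp]. exists k. rewrite in_seq, in_map_iff. split; [lia|].
    exists p. rewrite in_seq. split; [reflexivity | lia].
Qed.

Definition separators (M a : nat) : elt :=
  bigjoin (map (fun kp => tval (sep (S M) a (a - 1)%nat (fst kp) (snd kp))) (pairs M))
          (tval (radkill (S M))).

(** The image of x in L_a: x at index (a,a-1,2), 1 elsewhere on Delta. *)
Definition spike (M a : nat) (x : Z) : elt :=
  join (tval (pow Var (Z.to_nat (Z.of_nat a - x)))) (separators M a).

Lemma genB_tval t : genB (tval t).
Proof. unfold tval, gen. apply genB_evalA, genB_evalA, genB_gen. Qed.

Lemma genB_spike M a x : genB (spike M a x).
Proof.
  unfold spike, separators, join. apply genB_imp; [apply genB_imp|];
    try apply genB_tval; apply genB_bigjoin; try apply genB_tval;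
    intros y Hy; apply in_map_iff in Hy; destruct Hy as [kp [<- _]]; apply genB_tval.
Qed.

Lemma tval_Ln t k h : (h <= k)%nat ->
  tval t (k, h, 2%nat) = (evalL (Z.of_nat k) (Z.of_nat h) t, 0).
Proof. intros. unfold tval. apply evalA_Ln, gen_Ln. auto. Qed.

Lemma separators_at_a M a : (1 <= a <= M)%nat ->
  separators M a (a, (a - 1)%nat, 2%nat) = (0, 0).
Proof.
  intros Ha. unfold separators. apply bigjoin_Ln_bot.
  - rewrite tval_Ln, radkill_L by lia. reflexivity.
  - intros y Hy. apply in_map_iff in Hy. destruct Hy as [[k p] [<- _]].
    rewrite tval_Ln, sep_at_a by lia. reflexivity.
Qed.

Lemma spike_at_a M a x : (1 <= a <= M)%nat -> 0 <= x <= Z.of_nat a ->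
  spike M a x (a, (a - 1)%nat, 2%nat) = (x, 0).
Proof.
  intros Ha Hx. unfold spike. apply join_Ln_bot; auto using separators_at_a.
  rewrite tval_Ln, evalL_pow by (cbn [evalL]; lia). cbn [evalL].
  replace (Z.of_nat (a - 1)) with (Z.of_nat a - 1) by lia.
  rewrite Z2Nat.id by lia. f_equal. lia.
Qed.

Lemma separators_top_Ln M a k p : (1 <= k <= M)%nat -> (p < k)%nat ->
  (a * p <> k * (a - 1))%nat -> separators M a (k, p, 2%nat) = cone (k, p, 2%nat).
Proof.
  intros Hk Hp Hne. unfold separators. apply bigjoin_top. right.
  exists (tval (sep (S M) a (a - 1)%nat k p)). split.
  - apply in_map_iff. exists (k, p). split; [reflexivity | apply in_pairs; auto].
  - rewrite tval_Ln, sep_at_k by lia. reflexivity.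
Qed.

Lemma separators_top_Lkh M a k h i : (i <= 1)%nat -> (1 <= k <= M)%nat ->
  (forall p, (p < k)%nat -> (a * p <> k * (a - 1))%nat) ->
  separators M a (k, h, i) = cone (k, h, i).
Proof.
  intros Hi Hk Hne. unfold separators. apply bigjoin_top.
  replace (cone (k, h, i)) with (uL k h) by (destruct i as [|[|]]; reflexivity || lia).
  destruct (gen_Lkh k h i Hi) as [v [r [Hgen [Hv Hr]]]].
  destruct (Z.eq_dec v (Z.of_nat k)) as [-> | Hvk].
  - left. unfold tval. rewrite (evalA_Lkh_top gen _ k h i r Hi ltac:(lia) Hgen).
    rewrite radkill_C by (specialize (Hr eq_refl); lia).
    unfold uL. f_equal. lia.
  - right. exists (tval (sep (S M) a (a - 1)%nat k (Z.to_nat v))). split.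
    + apply in_map_iff. exists (k, Z.to_nat v). split; [reflexivity | apply in_pairs; lia].
    + unfold tval, sep. apply sharp_Lkh; rewrite ?Hgen; simpl; try lia.
      rewrite fst_evalA_Lkh, Hgen by lia. simpl.
      rewrite <- (Z2Nat.id v) at 1 by lia. apply sepraw_at_k; try lia.
      apply Hne. lia.
Qed.

Lemma separators_top_C M a : separators M a (0%nat, 0%nat, 3%nat) = cone (0%nat, 0%nat, 3%nat).
Proof.
  unfold separators. apply bigjoin_top. left.
  unfold tval. rewrite (evalA_C _ _ (-1)) by apply gen_C. rewrite radkill_C by lia. reflexivity.
Qed.

(** If p/k = (a-1)/a then a divides k, as (a-1)/a is in lowest terms. *)
Lemma divides_of_ratio a k p : (1 <= a)%nat -> (a * p = k * (a - 1))%nat -> Nat.divide a k.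
Proof. intros Ha He. exists (k - p)%nat. nia. Qed.

Lemma le_list_sum x l : In x l -> (x <= list_sum l)%nat.
Proof.
  induction l as [|y l IH]; simpl; [contradiction|].
  intros [<- | Hx]; [lia | specialize (IH Hx); lia].
Qed.

Lemma downset_bounds X L k : (forall m, In m X -> (0 < m)%nat) -> incl X L ->
  downset X k -> (1 <= k <= list_sum L)%nat.
Proof.
  intros Hpos Hincl [m [Hm Hkm]].
  pose proof (Hpos m Hm). pose proof (le_list_sum m L (Hincl m Hm)).
  destruct k as [|k]; [destruct Hkm as [q Hq]; lia|].
  pose proof (Nat.divide_pos_le (S k) m ltac:(lia) Hkm). lia.
Qed.

(** A coincidence p/k = (a-1)/a would force a | k | m for some m in I or J,
    which reducedness allows only for k = m = a, p = a - 1. *)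
Lemma separators_elsewhere I J K a t : reduced I J K -> In a I -> Delta I J K t ->
  t <> (a, (a - 1)%nat, 2%nat) ->
  separators (list_sum (I ++ J)) a t = cone t.
Proof.
  intros [HI [HJ [_ [_ [HaI_min _]]]]] HaI HD Hne.
  assert (Ha : (1 <= a)%nat) by (specialize (HI a HaI); lia).
  destruct t as [[k p] i]. simpl in HD.
  destruct HD as [[-> [Hp [Hd _]]] | [[Hi [Hp [Hd _]]] | [_ [-> [-> ->]]]]].
  - apply separators_top_Ln; auto.
    + apply (downset_bounds I); auto using incl_appl, incl_refl.
    + intro He. apply Hne. destruct Hd as [m [Hm Hkm]].
      assert (Ham : Nat.divide a m) by eauto using Nat.divide_trans, divides_of_ratio.
      destruct (Nat.eq_dec m a) as [-> | Hma].
      * assert (k = a) as -> by (apply Nat.divide_antisym; eauto using divides_of_ratio).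
        f_equal. f_equal. nia.
      * exfalso. exact (HaI_min a HaI m (or_introl (conj Hm Hma)) Ham).
  - apply separators_top_Lkh; [lia | |].
    + apply (downset_bounds J); auto using incl_appr, incl_refl.
    + intros q _ He. destruct Hd as [n [Hn Hkn]].
      apply (HaI_min a HaI n (or_intror Hn)).
      eauto using Nat.divide_trans, divides_of_ratio.
  - apply separators_top_C.
Qed.

Lemma idx_eq_dec (s t : idx) : {s = t} + {s <> t}.
Proof. repeat decide equality. Qed.

Lemma embeds_of_spike n h0 I J K (phi : Z -> elt) :
  Delta I J K (n, h0, 2%nat) ->
  (forall x, memLn n x -> genB (phi x)) ->
  (forall x, memLn n x -> phi x (n, h0, 2%nat) = (x, 0)) ->
  (forall x t, memLn n x -> Delta I J K t -> t <> (n, h0, 2%nat) -> phi x t = cone t) ->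
  embeds_in_B n I J K.
Proof.
  intros Ht0 Hgen Hat Hoff. exists phi.
  assert (Hop : forall (op : Z -> Z -> Z) (cop : idx -> Z * Z -> Z * Z -> Z * Z) x y t,
    memLn n x -> memLn n y -> memLn n (op x y) -> Delta I J K t ->
    (forall x y, cop (n, h0, 2%nat) (x, 0) (y, 0) = (op x y, 0)) ->
    cop t (cone t) (cone t) = cone t ->
    phi (op x y) t = cop t (phi x t) (phi y t)).
  { intros op cop x y t Hx Hy Hxy Ht Hcop Hidem.
    destruct (idx_eq_dec t (n, h0, 2%nat)) as [-> | Hne].
    - rewrite !Hat by auto. symmetry. apply Hcop.
    - rewrite !Hoff by auto. auto. }
  unfold memLn in *.
  split; [|split; [|split; [|split]]]; auto.
  - intros x y Hx Hy t Ht. apply (Hop (mulLn n) cmul); unfold mulLn in *; auto; try lia.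
    apply cone_idem.
  - intros x y Hx Hy t Ht. apply (Hop (impLn n) cimp); unfold impLn in *; auto; try lia.
    apply cone_idem.
  - intros t Ht. destruct (idx_eq_dec t (n, h0, 2%nat)) as [-> | Hne].
    + rewrite Hat by lia. reflexivity.
    + apply Hoff; auto. lia.
  - intros x y Hx Hy Heq. specialize (Heq _ Ht0). rewrite !Hat in Heq by auto. congruence.
Qed.

Theorem theorem3p10 (I J : list nat) (K : bool) (a : nat) :
  reduced I J K -> In a I -> embeds_in_B a I J K.
Proof.
  intros Hred HaI.
  set (M := list_sum (I ++ J)).
  assert (Ha : (1 <= a <= M)%nat).
  { destruct Hred as [HI _]. specialize (HI a HaI).
    pose proof (le_list_sum a (I ++ J) (in_or_app _ _ _ (or_introl HaI))). lia. }
  apply (embeds_of_spike a (a - 1) I J K (spike M a)).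
  - simpl. left. split; [reflexivity | split; [lia | split]].
    + exists a. auto using Nat.divide_refl.
    + apply Nat.bezout_1_gcd. exists 1%nat, 1%nat. lia.
  - intros. apply genB_spike.
  - intros x Hx. apply spike_at_a; auto.
  - intros x t Hx Ht Hne. unfold spike. apply join_top. right.
    apply (separators_elsewhere I J K); auto.
Qed.
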